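(* If $A$ is a pc monoid, then its seminormalization $A\to A_{\mathrm{sn}}$ exists and $A_{\mathrm{sn}}$ is also a pc monoid; if $A$ is pctf then so is $A_{\mathrm{sn}}$. Moreover, there is a functor $(-)_{\mathrm{sn}}$ from the category of pc monoids to the category of seminormal pc monoids sending a monoid to its seminormalization, and the maps $A\to A_{\mathrm{sn}}$ form a natural transformation from the identity to $(-)_{\mathrm{sn}}$.
   Context: A monoid is a pointed commutative monoid; morphisms preserve $0$, $1$ and multiplication. pc: isomorphic to $C/I$ with $C$ cancellative ($ac=bc,c\ne0\Rightarrow a=b$) and $I$ an ideal; pctf: the same with $C$ also torsionfree ($a^n=b^n$ for some $n\ge1\Rightarrow a=b$). $A$ is reduced if $a^2=b^2$ and $a^3=b^3$ imply $a=b$; $A_{\mathrm{red}}$ is $A$ modulo the congruence $a\sim b$ iff $a^n=b^n$ for all $n\gg0$. $A$ is seminormal if reduced and whenever $x^3=y^2$ there is $z\in A$ with $x=z^2$, $y=z^3$. A seminormalization of $A$ is a monoid map $A\to B$ with $B$ seminormal such that the induced $A_{\mathrm{red}}\to B$ is injective and for every $b\in B$, $b^n$ lies in (the image of) $A_{\mathrm{red}}$ for all $n\gg0$. *)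

From Stdlib Require Import Arith.

Record pcmon := PCMon {
  car :> Type;
  mul : car -> car -> car;
  one : car;
  zero : car;
  mulA : forall x y z, mul x (mul y z) = mul (mul x y) z;
  mulC : forall x y, mul x y = mul y x;
  mul1x : forall x, mul one x = x;
  mul0x : forall x, mul zero x = zero
}.

Arguments mul {_} _ _.
Arguments one {_}.
Arguments zero {_}.

Fixpoint pw {A : pcmon} (x : A) (n : nat) : A :=
  match n with
  | O => one
  | S k => mul x (pw x k)
  end.

Record hom (A B : pcmon) := Hom {
  hfun :> A -> B;
  hom0 : hfun zero = zero;
  hom1 : hfun one = one;
  homM : forall x y, hfun (mul x y) = mul (hfun x) (hfun y)
}.

Arguments hfun {A B} _ _.

Definition cancellative (C : pcmon) : Prop :=
  forall a b c : C, mul a c = mul b c -> c <> zero -> a = b.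

Definition torsionfree (C : pcmon) : Prop :=
  forall (a b : C) (n : nat), 1 <= n -> pw a n = pw b n -> a = b.

Definition is_ideal (C : pcmon) (I : C -> Prop) : Prop :=
  I zero /\ forall x y : C, I x -> I (mul x y).

(** [rees_iso C I p]: the morphism p : C -> A induces an isomorphism
    C/I ~= A, where C/I is the Rees quotient (all elements of I collapsed
    to 0): p is surjective and p x = p y iff x = y or both lie in I. *)
Definition rees_iso (C : pcmon) (I : C -> Prop) (A : pcmon) (p : hom C A) : Prop :=
  (forall a : A, exists x : C, p x = a) /\
  (forall x y : C, p x = p y <-> (x = y \/ (I x /\ I y))).

Definition is_pc (A : pcmon) : Prop :=
  exists (C : pcmon) (I : C -> Prop) (p : hom C A),
    cancellative C /\ is_ideal C I /\ rees_iso C I A p.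

Definition is_pctf (A : pcmon) : Prop :=
  exists (C : pcmon) (I : C -> Prop) (p : hom C A),
    cancellative C /\ torsionfree C /\ is_ideal C I /\ rees_iso C I A p.

Definition reduced (A : pcmon) : Prop :=
  forall a b : A, pw a 2 = pw b 2 -> pw a 3 = pw b 3 -> a = b.

(** The congruence defining A_red: a^n = b^n for all n >> 0. *)
Definition red_equiv {A : pcmon} (a b : A) : Prop :=
  exists N : nat, forall n, N <= n -> pw a n = pw b n.

Definition seminormal (A : pcmon) : Prop :=
  reduced A /\
  forall x y : A, pw x 3 = pw y 2 -> exists z : A, x = pw z 2 /\ y = pw z 3.

(** f : A -> B is a seminormalization: B seminormal; f factors through
    A_red (f a = f b whenever a ~ b) and the induced map A_red -> B is
    injective (f a = f b -> a ~ b); every b in B has b^n in the image of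
    A_red (= image of f) for all n >> 0. *)
Definition is_seminormalization {A B : pcmon} (f : hom A B) : Prop :=
  seminormal B /\
  (forall a b : A, f a = f b <-> red_equiv a b) /\
  (forall b : B, exists N : nat, forall n, N <= n -> exists a : A, f a = pw b n).

From Stdlib Require Import Arith Lia Classical ClassicalEpsilon FunctionalExtensionality PropExtensionality ProofIrrelevance.

(* A point b of the seminormalization is known through its powers, so it is
   represented by an eventually multiplicative sequence n |-> "b ^ n" of elements
   of A, taken up to eventual equality; A maps to it by a |-> (a ^ n)_n, whose
   kernel is the congruence defining A_red, and b ^ n is the n-th term of the
   sequence for n >> 0.  Reducedness holds because every large n is 2a + 3b with
   a, b large.  For seminormality, s ^ 3 = t ^ 2 gives s (3u) = t (2u) for large
   u, so s a * t b depends only on 2a + 3b and z (2a + 3b) := s a * t b is the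
   required root.  If A = C/I with C cancellative, a nonzero sequence of A is
   eventually nonzero, where C -> A is injective; hence sequences lift termwise
   to C, A_sn is the Rees quotient of C_sn by the kernel of the induced map, and
   cancellativity and torsion-freeness of C pass termwise to C_sn. *)

Lemma mulx1 {M : pcmon} (x : M) : mul x one = x.
Proof. rewrite mulC; apply mul1x. Qed.

Lemma mulACA {M : pcmon} (a b c d : M) :
  mul (mul a b) (mul c d) = mul (mul a c) (mul b d).
Proof. rewrite <- !mulA; f_equal; rewrite !mulA; f_equal; apply mulC. Qed.

Lemma pw_add {M : pcmon} (a : M) m n : pw a (m + n) = mul (pw a m) (pw a n).
Proof. induction m as [|m IH]; simpl; [now rewrite mul1x | now rewrite IH, mulA]. Qed.

Lemma pw_mul {M : pcmon} (a b : M) n : pw (mul a b) n = mul (pw a n) (pw b n).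
Proof. induction n as [|n IH]; simpl; [now rewrite mul1x | now rewrite IH, mulACA]. Qed.

Lemma pw_one {M : pcmon} n : pw (@one M) n = one.
Proof. induction n as [|n IH]; simpl; [reflexivity | now rewrite IH, mul1x]. Qed.

Lemma pw_zero {M : pcmon} n : 1 <= n -> pw (@zero M) n = zero.
Proof. destruct n; simpl; [lia | intros; apply mul0x]. Qed.

Lemma hom_pw {A B : pcmon} (f : hom A B) a n : f (pw a n) = pw (f a) n.
Proof. induction n as [|n IH]; simpl; [apply hom1 | now rewrite homM, IH]. Qed.

Definition hom_comp {A B C : pcmon} (f : hom A B) (g : hom B C) : hom A C.
Proof.
  refine (Hom A C (fun x => g (f x)) _ _ _).
  - now rewrite !hom0.
  - now rewrite !hom1.
  - intros x y; now rewrite !homM.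
Defined.

Lemma is_ideal_kernel {A B : pcmon} (f : hom A B) : is_ideal A (fun x => f x = zero).
Proof. split; [apply hom0 | intros x y Hx; now rewrite homM, Hx, mul0x]. Qed.

Lemma rees_iso_inj {C A : pcmon} (I : C -> Prop) (p : hom C A) :
  is_ideal C I -> rees_iso C I A p ->
  forall x y, p x = p y -> p x <> zero -> x = y.
Proof.
  intros [I0 _] [_ Hp] x y E Hx.
  destruct (proj1 (Hp x y) E) as [Exy | [Ix _]]; [exact Exy |].
  exfalso; apply Hx; rewrite <- (hom0 _ _ p); apply Hp; auto.
Qed.

Lemma rees_iso_kernel {C A : pcmon} (p : hom C A) :
  (forall a, exists x, p x = a) ->
  (forall x y, p x = p y -> p x <> zero -> x = y) ->
  rees_iso C (fun x => p x = zero) A p.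
Proof.
  intros Hsurj Hinj; split; [exact Hsurj |]; intros x y; split.
  - intros E; destruct (classic (p x = zero)) as [Z | NZ].
    + right; split; congruence.
    + left; auto.
  - intros [-> | [Hx Hy]]; congruence.
Qed.

Record congruence (M : pcmon) := Congruence {
  cong_rel :> M -> M -> Prop;
  cong_refl : forall x, cong_rel x x;
  cong_sym : forall x y, cong_rel x y -> cong_rel y x;
  cong_trans : forall x y z, cong_rel x y -> cong_rel y z -> cong_rel x z;
  cong_mul : forall x x' y y', cong_rel x x' -> cong_rel y y' ->
    cong_rel (mul x y) (mul x' y')
}.

Arguments cong_refl {M} _ _.
Arguments cong_sym {M} _ {x y}.
Arguments cong_trans {M} _ {x y z}.
Arguments cong_mul {M} _ {x x' y y'}.

Section Quotient.

Context {M : pcmon} (R : congruence M).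

(* Classes are encoded as the predicates [R x], so that equality of classes is
   Leibniz equality (by functional and propositional extensionality). *)
Definition quot := {P : M -> Prop | exists x, P = R x}.

Definition cls (x : M) : quot := exist _ (R x) (ex_intro _ x eq_refl).

Lemma cls_eq x y : cls x = cls y <-> R x y.
Proof.
  split.
  - intros E; apply (f_equal (@proj1_sig _ _)) in E; simpl in E.
    rewrite E; apply cong_refl.
  - intros Hxy; apply subset_eq_compat, functional_extensionality; intros z.
    apply propositional_extensionality; split; intros H.
    + exact (cong_trans R (cong_sym R Hxy) H).
    + exact (cong_trans R Hxy H).
Qed.

Lemma quot_ind (P : quot -> Prop) : (forall x, P (cls x)) -> forall q, P q.
Proof. intros H [Q [x E]]; subst Q; apply H. Qed.

Definition rep (q : quot) : M :=
  proj1_sig (constructive_indefinite_description _ (proj2_sig q)).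

Lemma rep_cls x : R (rep (cls x)) x.
Proof.
  unfold rep; destruct (constructive_indefinite_description _ _) as [y Ey]; simpl in *.
  rewrite <- Ey; apply cong_refl.
Qed.

Definition qmul (p q : quot) : quot := cls (mul (rep p) (rep q)).

Lemma qmul_cls x y : qmul (cls x) (cls y) = cls (mul x y).
Proof. apply cls_eq, cong_mul; apply rep_cls. Qed.

Definition quot_pcmon : pcmon.
Proof.
  refine (PCMon quot qmul (cls one) (cls zero) _ _ _ _).
  - intros p q r; induction p using quot_ind; induction q using quot_ind;
      induction r using quot_ind; rewrite !qmul_cls; f_equal; apply mulA.
  - intros p q; induction p using quot_ind; induction q using quot_ind;
      rewrite !qmul_cls; f_equal; apply mulC.
  - intros p; induction p using quot_ind; rewrite qmul_cls; f_equal; apply mul1x.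
  - intros p; induction p using quot_ind; rewrite qmul_cls; f_equal; apply mul0x.
Defined.

Definition quot_proj : hom M quot_pcmon :=
  Hom M quot_pcmon cls eq_refl eq_refl (fun x y => eq_sym (qmul_cls x y)).

Lemma quot_proj_eq x y : quot_proj x = quot_proj y <-> R x y.
Proof. apply cls_eq. Qed.

Lemma quot_proj_ind (P : quot_pcmon -> Prop) :
  (forall x, P (quot_proj x)) -> forall q, P q.
Proof. apply quot_ind. Qed.

Section Lift.

Context {N : pcmon} (f : hom M N) (f_compat : forall x y, R x y -> f x = f y).

Definition quot_lift : hom quot_pcmon N.
Proof.
  refine (Hom quot_pcmon N (fun q => f (rep q)) _ _ _).
  - simpl; rewrite (f_compat _ _ (rep_cls zero)); apply hom0.
  - simpl; rewrite (f_compat _ _ (rep_cls one)); apply hom1.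
  - intros p q; induction p as [x] using quot_ind; induction q as [y] using quot_ind.
    simpl; rewrite qmul_cls, <- homM; apply f_compat.
    exact (cong_trans R (rep_cls _) (cong_sym R (cong_mul R (rep_cls x) (rep_cls y)))).
Defined.

Lemma quot_lift_proj x : quot_lift (quot_proj x) = f x.
Proof. exact (f_compat _ _ (rep_cls x)). Qed.

End Lift.

End Quotient.

Section Sequences.

Context {M : pcmon}.

Definition mult_from (N : nat) (s : nat -> M) : Prop :=
  forall m n, N <= m -> N <= n -> s (m + n) = mul (s m) (s n).

Definition ev_mult (s : nat -> M) : Prop := exists N, mult_from N s.

Definition ev_eq (s t : nat -> M) : Prop := exists N, forall n, N <= n -> s n = t n.

Lemma mult_from_mono N N' s : N <= N' -> mult_from N s -> mult_from N' s.
Proof. intros HN Hs m n Hm Hn; apply Hs; lia. Qed.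

Lemma mult_from_pw N s : mult_from N s ->
  forall k n, 1 <= k -> N <= n -> pw (s n) k = s (k * n).
Proof.
  intros Hs k n Hk Hn; induction k as [|[|k] IH]; [lia | |].
  - simpl; now rewrite mulx1, Nat.add_0_r.
  - change (S (S k) * n) with (n + S k * n); simpl pw.
    rewrite Hs by nia; f_equal; apply IH; lia.
Qed.

Lemma ev_mult_nonzero s : ev_mult s -> ~ ev_eq s (fun _ => zero) ->
  exists N, forall n, N <= n -> s n <> zero.
Proof.
  intros [N Hs] Hnz; exists N; intros k Hk Z; apply Hnz.
  exists (k + N); intros n Hn; replace n with (k + (n - k)) by lia.
  rewrite Hs, Z by lia; apply mul0x.
Qed.

Definition split3 (K n : nat) : nat := K + (n - 3 * K) mod 2.
Definition split2 (K n : nat) : nat := (n - 3 * split3 K n) / 2.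

Lemma split23_spec K n : 5 * K + 2 <= n ->
  K <= split2 K n /\ K <= split3 K n /\ n = 2 * split2 K n + 3 * split3 K n.
Proof.
  unfold split2, split3; intros Hn.
  pose proof (Nat.div_mod_eq (n - 3 * K) 2).
  pose proof (Nat.mod_upper_bound (n - 3 * K) 2).
  pose proof (Nat.div_mod_eq (n - 3 * (K + (n - 3 * K) mod 2)) 2).
  pose proof (Nat.mod_upper_bound (n - 3 * (K + (n - 3 * K) mod 2)) 2).
  lia.
Qed.

Lemma ev_eq_of_squares_cubes s t : ev_mult s -> ev_mult t ->
  ev_eq (fun n => pw (s n) 2) (fun n => pw (t n) 2) ->
  ev_eq (fun n => pw (s n) 3) (fun n => pw (t n) 3) -> ev_eq s t.
Proof.
  intros [Ns Hs] [Nt Ht] [K2 H2] [K3 H3].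
  set (K := Ns + Nt + K2 + K3).
  exists (5 * K + 2); intros n Hn.
  destruct (split23_spec K n Hn) as (Ha & Hb & En).
  rewrite En, Hs, Ht by lia.
  rewrite <- (mult_from_pw Ns s Hs), <- (mult_from_pw Ns s Hs),
    <- (mult_from_pw Nt t Ht), <- (mult_from_pw Nt t Ht), H2, H3 by lia.
  reflexivity.
Qed.

Section Root.

Variables (s t : nat -> M) (L : nat).
Hypotheses (Hs : mult_from L s) (Ht : mult_from L t)
  (Hst : forall n, L <= n -> s (3 * n) = t (2 * n)).

Lemma root_trade c u b : L <= c -> L <= u -> L <= b ->
  mul (s (c + 3 * u)) (t b) = mul (s c) (t (2 * u + b)).
Proof. intros; rewrite Hs, Ht, Hst by lia; now rewrite <- mulA. Qed.

Lemma root_term_invariant a b a' b' :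
  4 * L <= a -> 4 * L <= b -> 4 * L <= a' -> 4 * L <= b' ->
  2 * a + 3 * b = 2 * a' + 3 * b' -> mul (s a) (t b) = mul (s a') (t b').
Proof.
  assert (ordered : forall a b a' b', 4 * L <= a' -> 4 * L <= b -> b <= b' ->
            2 * a + 3 * b = 2 * a' + 3 * b' -> mul (s a) (t b) = mul (s a') (t b')).
  { intros a0 b0 a0' b0' Ha' Hb Hbb E.
    assert (exists v, b0' = b0 + 2 * v /\ a0 = a0' + 3 * v) as (v & -> & ->).
    { destruct (Nat.Even_or_Odd (b0' - b0)) as [[v Hv] | [v Hv]]; [exists v |]; lia. }
    transitivity (mul (s (a0' - 3 * L)) (t (2 * L + (b0 + 2 * v)))).
    - replace (a0' + 3 * v) with (a0' - 3 * L + 3 * (L + v)) by lia.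
      rewrite root_trade by lia; do 2 f_equal; lia.
    - rewrite <- root_trade by lia; do 2 f_equal; lia. }
  intros; destruct (Nat.le_ge_cases b b').
  - apply ordered; lia.
  - symmetry; apply ordered; lia.
Qed.

Definition root_seq (n : nat) : M :=
  mul (s (split2 (4 * L) n)) (t (split3 (4 * L) n)).

Lemma root_seq_spec n : 20 * L + 2 <= n -> exists a b,
  4 * L <= a /\ 4 * L <= b /\ n = 2 * a + 3 * b /\ root_seq n = mul (s a) (t b).
Proof.
  intros Hn; destruct (split23_spec (4 * L) n) as (Ha & Hb & En); [lia |].
  exists (split2 (4 * L) n), (split3 (4 * L) n); auto.
Qed.

Lemma root_seq_mult : mult_from (20 * L + 2) root_seq.
Proof.
  intros m n Hm Hn.
  destruct (root_seq_spec m) as (a1 & b1 & ? & ? & ? & ->); [lia |].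
  destruct (root_seq_spec n) as (a2 & b2 & ? & ? & ? & ->); [lia |].
  destruct (root_seq_spec (m + n)) as (a3 & b3 & ? & ? & ? & ->); [lia |].
  rewrite mulACA, <- Hs, <- Ht by lia.
  apply root_term_invariant; lia.
Qed.

Lemma root_seq_square : ev_eq s (fun n => pw (root_seq n) 2).
Proof.
  exists (20 * L + 2); intros n Hn.
  rewrite (mult_from_pw _ _ root_seq_mult) by lia.
  destruct (root_seq_spec (2 * n)) as (a & b & ? & ? & ? & ->); [lia |].
  replace n with (n - 12 * L + 3 * (4 * L)) at 1 by lia.
  rewrite Hs, Hst by lia.
  apply root_term_invariant; lia.
Qed.

Lemma root_seq_cube : ev_eq t (fun n => pw (root_seq n) 3).
Proof.
  exists (20 * L + 2); intros n Hn.
  rewrite (mult_from_pw _ _ root_seq_mult) by lia.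
  destruct (root_seq_spec (3 * n)) as (a & b & ? & ? & ? & ->); [lia |].
  replace n with (2 * (4 * L) + (n - 8 * L)) at 1 by lia.
  rewrite Ht, <- Hst by lia.
  apply root_term_invariant; lia.
Qed.

End Root.

Lemma ev_cube_square_root s t : ev_mult s -> ev_mult t ->
  ev_eq (fun n => pw (s n) 3) (fun n => pw (t n) 2) ->
  exists z, ev_mult z /\ ev_eq s (fun n => pw (z n) 2) /\ ev_eq t (fun n => pw (z n) 3).
Proof.
  intros [Ns Hs] [Nt Ht] [K H].
  set (L := Ns + Nt + K).
  assert (Hs' : mult_from L s) by (apply (mult_from_mono Ns); [lia | exact Hs]).
  assert (Ht' : mult_from L t) by (apply (mult_from_mono Nt); [lia | exact Ht]).
  assert (Hst : forall n, L <= n -> s (3 * n) = t (2 * n)).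
  { intros n Hn; rewrite <- (mult_from_pw L s Hs'), <- (mult_from_pw L t Ht'), H by lia.
    reflexivity. }
  exists (root_seq s t L); repeat split.
  - exists (20 * L + 2); exact (root_seq_mult s t L Hs' Ht' Hst).
  - exact (root_seq_square s t L Hs' Ht' Hst).
  - exact (root_seq_cube s t L Hs' Ht' Hst).
Qed.

End Sequences.

Record emseq (M : pcmon) := EmSeq { em_fun :> nat -> M; em_mult : ev_mult em_fun }.

Arguments EmSeq {M} _ _.
Arguments em_mult {M} _.

Section EventuallyMultiplicative.

Context {M : pcmon}.

Lemma emseq_ext (x y : emseq M) : (forall n, x n = y n) -> x = y.
Proof.
  destruct x as [s Hs], y as [t Ht]; simpl; intros E.
  apply functional_extensionality in E; subst t; f_equal; apply proof_irrelevance.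
Qed.

Lemma ev_mult_idem (c : M) : mul c c = c -> ev_mult (fun _ => c).
Proof. intros Hc; exists 0; intros m n _ _; symmetry; exact Hc. Qed.

Lemma ev_mult_mul (s t : nat -> M) : ev_mult s -> ev_mult t ->
  ev_mult (fun n => mul (s n) (t n)).
Proof.
  intros [N Hs] [N' Ht]; exists (N + N'); intros m n Hm Hn.
  rewrite Hs, Ht by lia; apply mulACA.
Qed.

Lemma ev_mult_pw (a : M) : ev_mult (pw a).
Proof. exists 0; intros m n _ _; apply pw_add. Qed.

Definition emseq_mul (x y : emseq M) : emseq M :=
  EmSeq (fun n => mul (x n) (y n)) (ev_mult_mul x y (em_mult x) (em_mult y)).

Definition emseq_pcmon : pcmon.
Proof.
  refine (PCMon (emseq M) emseq_mul
    (EmSeq (fun _ => one) (ev_mult_idem one (mul1x _ one)))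
    (EmSeq (fun _ => zero) (ev_mult_idem zero (mul0x _ zero))) _ _ _ _);
    intros; apply emseq_ext; intros n; simpl.
  - apply mulA.
  - apply mulC.
  - apply mul1x.
  - apply mul0x.
Defined.

Definition em_coord (n : nat) : hom emseq_pcmon M :=
  Hom emseq_pcmon M (fun x => x n) eq_refl eq_refl (fun _ _ => eq_refl).

Lemma em_pw (x : emseq_pcmon) k n : pw x k n = pw (x n) k.
Proof. exact (hom_pw (em_coord n) x k). Qed.

Definition ev_eq_congruence : congruence emseq_pcmon.
Proof.
  refine (Congruence emseq_pcmon (fun x y => ev_eq x y) _ _ _ _).
  - intros x; exists 0; auto.
  - intros x y [N E]; exists N; intros n Hn; symmetry; auto.
  - intros x y z [N E] [N' E']; exists (N + N'); intros n Hn.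
    rewrite E, E' by lia; reflexivity.
  - intros x x' y y' [N E] [N' E']; exists (N + N'); intros n Hn; simpl.
    rewrite E, E' by lia; reflexivity.
Defined.

End EventuallyMultiplicative.

Arguments emseq_pcmon : clear implicits.

Lemma ev_mult_hom {A B : pcmon} (f : hom A B) (s : nat -> A) :
  ev_mult s -> ev_mult (fun n => f (s n)).
Proof. intros [N Hs]; exists N; intros m n Hm Hn; rewrite Hs by assumption; apply homM. Qed.

Definition emseq_map {A B : pcmon} (f : hom A B) : hom (emseq_pcmon A) (emseq_pcmon B).
Proof.
  refine (Hom (emseq_pcmon A) (emseq_pcmon B)
    (fun x : emseq A => EmSeq (fun n => f (x n)) (ev_mult_hom f x (em_mult x))) _ _ _).
  - apply emseq_ext; intros; apply hom0.
  - apply emseq_ext; intros; apply hom1.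
  - intros x y; apply emseq_ext; intros; apply homM.
Defined.

Definition sn (M : pcmon) : pcmon := quot_pcmon (@ev_eq_congruence M).

Definition sn_proj (M : pcmon) : hom (emseq_pcmon M) (sn M) := quot_proj _.

Arguments sn_proj {M}.

Section Seminormalization.

Context {M : pcmon}.

Lemma sn_ind (P : sn M -> Prop) : (forall x, P (sn_proj x)) -> forall q, P q.
Proof. apply quot_proj_ind. Qed.

Lemma sn_proj_eq (x y : emseq_pcmon M) : sn_proj x = sn_proj y <-> ev_eq x y.
Proof. apply quot_proj_eq. Qed.

Lemma sn_proj_zero (x : emseq_pcmon M) : sn_proj x = zero <-> ev_eq x (fun _ => zero).
Proof. rewrite <- (hom0 _ _ sn_proj); apply sn_proj_eq. Qed.

Lemma sn_proj_pw_eq (x y : emseq_pcmon M) k :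
  sn_proj x = pw (sn_proj y) k <-> ev_eq x (fun n => pw (y n) k).
Proof.
  rewrite <- hom_pw, sn_proj_eq; unfold ev_eq; setoid_rewrite em_pw; reflexivity.
Qed.

Lemma sn_pw_eq (x y : emseq_pcmon M) j k :
  pw (sn_proj x) j = pw (sn_proj y) k <->
  ev_eq (fun n => pw (x n) j) (fun n => pw (y n) k).
Proof.
  rewrite <- !hom_pw, sn_proj_eq; unfold ev_eq; setoid_rewrite em_pw; reflexivity.
Qed.

Lemma sn_proj_nonzero (x : emseq_pcmon M) : sn_proj x <> zero ->
  exists N, forall n, N <= n -> x n <> zero.
Proof. rewrite sn_proj_zero; apply ev_mult_nonzero, em_mult. Qed.

Lemma sn_seminormal : seminormal (sn M).
Proof.
  split.
  - intros a b; induction a using sn_ind; induction b using sn_ind.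
    rewrite !sn_pw_eq, sn_proj_eq; apply ev_eq_of_squares_cubes; apply em_mult.
  - intros a b; induction a using sn_ind; induction b using sn_ind.
    rewrite sn_pw_eq; intros H.
    destruct (ev_cube_square_root a b (em_mult a) (em_mult b) H) as (z & Hz & Hsq & Hcube).
    exists (sn_proj (EmSeq z Hz)); rewrite !sn_proj_pw_eq; auto.
Qed.

Lemma sn_cancellative : cancellative M -> cancellative (sn M).
Proof.
  intros HM a b c; induction a using sn_ind; induction b using sn_ind;
    induction c using sn_ind.
  rewrite <- !homM, !sn_proj_eq; intros [K E] Hc.
  destruct (sn_proj_nonzero c Hc) as [N Hnz]; exists (K + N); intros n Hn.
  apply (HM _ _ (c n)); [exact (E n ltac:(lia)) | apply Hnz; lia].
Qed.

Lemma sn_torsionfree : torsionfree M -> torsionfree (sn M).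
Proof.
  intros HM a b k Hk; induction a using sn_ind; induction b using sn_ind.
  rewrite sn_pw_eq, sn_proj_eq; intros [N E]; exists N; intros n Hn.
  exact (HM _ _ k Hk (E n Hn)).
Qed.

End Seminormalization.

Definition sn_eta (M : pcmon) : hom M (sn M).
Proof.
  refine (Hom M (sn M) (fun a => sn_proj (EmSeq (pw a) (ev_mult_pw a))) _ _ _).
  - apply sn_proj_zero; exists 1; intros n Hn; apply pw_zero; exact Hn.
  - rewrite <- (hom1 _ _ sn_proj); f_equal; apply emseq_ext; intros n; apply pw_one.
  - intros a b; rewrite <- homM; f_equal; apply emseq_ext; intros n; apply pw_mul.
Defined.

Lemma sn_eta_proj (M : pcmon) (a : M) :
  sn_eta M a = sn_proj (EmSeq (pw a) (ev_mult_pw a)).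
Proof. reflexivity. Qed.

Definition sn_map {A B : pcmon} (f : hom A B) : hom (sn A) (sn B).
Proof.
  refine (quot_lift _ (hom_comp (emseq_map f) sn_proj) _).
  intros x y [N E]; apply sn_proj_eq; exists N; intros n Hn; simpl; now rewrite E.
Defined.

Lemma sn_map_proj {A B : pcmon} (f : hom A B) (x : emseq_pcmon A) :
  sn_map f (sn_proj x) = sn_proj (emseq_map f x).
Proof. exact (quot_lift_proj _ _ _ x). Qed.

Lemma sn_is_seminormalization (M : pcmon) : is_seminormalization (sn_eta M).
Proof.
  split; [apply sn_seminormal | split].
  - intros a b; apply sn_proj_eq.
  - intros b; induction b as [x] using sn_ind.
    destruct (em_mult x) as [N Hx]; exists (N + 1); intros n Hn; exists (x n).
    rewrite sn_eta_proj, sn_proj_pw_eq; exists (N + 1); intros k Hk; simpl.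
    rewrite !(mult_from_pw N x Hx) by lia; f_equal; lia.
Qed.

Lemma sn_map_id {A : pcmon} (h : hom A A) : (forall a, h a = a) ->
  forall x, sn_map h x = x.
Proof.
  intros Hh x; induction x using sn_ind.
  rewrite sn_map_proj; f_equal; apply emseq_ext; intros n; apply Hh.
Qed.

Lemma sn_map_comp {A B C : pcmon} (f : hom A B) (g : hom B C) (h : hom A C) :
  (forall a, h a = g (f a)) -> forall x, sn_map h x = sn_map g (sn_map f x).
Proof.
  intros Hh x; induction x using sn_ind.
  rewrite !sn_map_proj; f_equal; apply emseq_ext; intros n; apply Hh.
Qed.

Lemma sn_eta_natural {A B : pcmon} (f : hom A B) a :
  sn_map f (sn_eta A a) = sn_eta B (f a).
Proof.
  rewrite !sn_eta_proj, sn_map_proj; f_equal; apply emseq_ext; intros n; apply hom_pw.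
Qed.

Section ReesPresentation.

Context {C A : pcmon} (I : C -> Prop) (p : hom C A).
Hypotheses (HI : is_ideal C I) (Hp : rees_iso C I A p).

Lemma sn_map_inj_nonzero (x y : sn C) :
  sn_map p x = sn_map p y -> sn_map p x <> zero -> x = y.
Proof.
  induction x using sn_ind; induction y using sn_ind.
  rewrite !sn_map_proj, sn_proj_eq; intros [K E] Hnz.
  destruct (sn_proj_nonzero _ Hnz) as [N HN].
  apply sn_proj_eq; exists (K + N); intros n Hn.
  apply (rees_iso_inj I p HI Hp); [apply E | apply HN]; lia.
Qed.

Lemma sn_map_surjective (q : sn A) : exists x, sn_map p x = q.
Proof.
  induction q as [y] using sn_ind.
  destruct (classic (sn_proj y = zero)) as [Z | NZ].
  { exists zero; rewrite hom0; auto. }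
  destruct (sn_proj_nonzero y NZ) as [N HN].
  destruct (choice (fun a c => p c = a) (proj1 Hp)) as [g Hg].
  assert (Hgy : ev_mult (fun n => g (y n))).
  { destruct (em_mult y) as [Ny Hy]; exists (N + Ny); intros m n Hm Hn.
    apply (rees_iso_inj I p HI Hp).
    - rewrite homM, !Hg; apply Hy; lia.
    - rewrite Hg; apply HN; lia. }
  exists (sn_proj (EmSeq _ Hgy)); rewrite sn_map_proj; f_equal.
  apply emseq_ext; intros n; apply Hg.
Qed.

Lemma sn_rees_iso : rees_iso (sn C) (fun x => sn_map p x = zero) (sn A) (sn_map p).
Proof.
  apply rees_iso_kernel; [apply sn_map_surjective | apply sn_map_inj_nonzero].
Qed.

End ReesPresentation.

Lemma sn_pc (A : pcmon) : is_pc A -> is_pc (sn A).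
Proof.
  intros (C & I & p & HC & HI & Hp).
  exists (sn C), (fun x => sn_map p x = zero), (sn_map p).
  split; [apply sn_cancellative, HC |].
  split; [apply is_ideal_kernel | exact (sn_rees_iso I p HI Hp)].
Qed.

Lemma sn_pctf (A : pcmon) : is_pctf A -> is_pctf (sn A).
Proof.
  intros (C & I & p & HC & HT & HI & Hp).
  exists (sn C), (fun x => sn_map p x = zero), (sn_map p).
  split; [apply sn_cancellative, HC |].
  split; [apply sn_torsionfree, HT |].
  split; [apply is_ideal_kernel | exact (sn_rees_iso I p HI Hp)].
Qed.

Theorem proposition1p15 :
  exists (Sn : pcmon -> pcmon)
         (eta : forall A : pcmon, hom A (Sn A))
         (Smap : forall A B : pcmon, hom A B -> hom (Sn A) (Sn B)),
    (forall A : pcmon, is_pc A ->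
       is_seminormalization (eta A) /\ is_pc (Sn A) /\ seminormal (Sn A) /\
       (is_pctf A -> is_pctf (Sn A))) /\
    (forall (A : pcmon), is_pc A ->
       forall h : hom A A, (forall a, h a = a) ->
       forall x : Sn A, Smap A A h x = x) /\
    (forall (A B C : pcmon) (f : hom A B) (g : hom B C),
       is_pc A -> is_pc B -> is_pc C ->
       forall (h : hom A C), (forall a, h a = g (f a)) ->
       forall x : Sn A, Smap A C h x = Smap B C g (Smap A B f x)) /\
    (forall (A B : pcmon) (f : hom A B), is_pc A -> is_pc B ->
       forall a : A, Smap A B f (eta A a) = eta B (f a)).
Proof.
  exists sn, sn_eta, (fun A B f => sn_map f).
  split; [| split; [| split]].
  - intros A HA; refine (conj _ (conj _ (conj _ _))).
    + apply sn_is_seminormalization.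
    + apply sn_pc, HA.
    + apply sn_seminormal.
    + apply sn_pctf.
  - intros A _; apply sn_map_id.
  - intros A B C f g _ _ _; apply sn_map_comp.
  - intros A B f _ _; apply sn_eta_natural.
Qed.
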